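(* Let $\mathcal L$ be a linearly ordered non-discrete MV-algebra and let $0\le p<q\le 1$ in $L$. Then $$[q,1]\sqsubseteq\!\!\to\,]p,1]=\,]q\to p,1].$$
   Context: $\mathcal L=(L,\oplus,\lnot,0)$ is a linearly ordered MV-algebra. We write $1=\lnot 0$ and $x\to y=\lnot x\oplus y$. Non-discrete means no element has an immediate successor or an immediate predecessor. We write $[p,1]=\{x: x\ge p\}$ and $]p,1]=\{x:x>p\}$. For an upward-closed $\mathcal F$ and $a\in L$, let $\mathcal F_a=\{z:z\to a\notin\mathcal F\}$. For upward-closed $\mathcal F\subseteq\mathcal G$ we put $\mathcal F\sqsubseteq\!\!\to\mathcal G=\bigcap_{a\in L\setminus\mathcal G}\mathcal F_a$. *)

From Stdlib Require Import Classical.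

(* An MV-algebra (Chang's axioms, in the equational form of Cignoli–D'Ottaviano–Mundici):
   (L, (+), 0) commutative monoid, ~~x = x, x (+) ~0 = ~0,
   ~(~x (+) y) (+) y = ~(~y (+) x) (+) x. *)
Record MVAlgebra := {
  mv_car :> Type;
  mv_oplus : mv_car -> mv_car -> mv_car;
  mv_neg : mv_car -> mv_car;
  mv_zero : mv_car;
  mv_oplusA : forall x y z, mv_oplus x (mv_oplus y z) = mv_oplus (mv_oplus x y) z;
  mv_oplusC : forall x y, mv_oplus x y = mv_oplus y x;
  mv_oplus0 : forall x, mv_oplus x mv_zero = x;
  mv_negK : forall x, mv_neg (mv_neg x) = x;
  mv_oplus1 : forall x, mv_oplus x (mv_neg mv_zero) = mv_neg mv_zero;
  mv_luk : forall x y,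
    mv_oplus (mv_neg (mv_oplus (mv_neg x) y)) y =
    mv_oplus (mv_neg (mv_oplus (mv_neg y) x)) x
}.

Arguments mv_oplus {_}.
Arguments mv_neg {_}.
Arguments mv_zero {_}.

Section Defs.
Variable L : MVAlgebra.

Definition mv_one : L := mv_neg mv_zero.

Definition mv_imp (x y : L) : L := mv_oplus (mv_neg x) y.

Definition mv_le (x y : L) : Prop := mv_imp x y = mv_one.
Definition mv_lt (x y : L) : Prop := mv_le x y /\ x <> y.

Definition linearly_ordered : Prop := forall x y : L, mv_le x y \/ mv_le y x.

Definition mv_covers (x y : L) : Prop :=
  mv_lt x y /\ ~ (exists z, mv_lt x z /\ mv_lt z y).

Definition non_discrete : Prop :=
  (forall x : L, ~ exists y, mv_covers x y) /\
  (forall x : L, ~ exists y, mv_covers y x).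

Definition upward_closed (F : L -> Prop) : Prop :=
  forall x y, F x -> mv_le x y -> F y.

Definition closed_up (p : L) : L -> Prop := fun x => mv_le p x.
Definition open_up (p : L) : L -> Prop := fun x => mv_lt p x.

(* F_a = { z : z -> a \notin F } *)
Definition Fsub (F : L -> Prop) (a : L) : L -> Prop := fun z => ~ F (mv_imp z a).

(* F ⊑→ G = ⋂_{a ∈ L \ G} F_a *)
Definition sqimp (F G : L -> Prop) : L -> Prop :=
  fun z => forall a : L, ~ G a -> Fsub F a z.

End Defs.

Arguments mv_one {_}.
Arguments mv_imp {_}.
Arguments mv_le {_}.
Arguments mv_lt {_}.
Arguments closed_up {_}.
Arguments open_up {_}.
Arguments sqimp {_}.

From Stdlib Require Import Classical.

(* The argument only uses the elementary theory of the natural order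
   x <= y  :<->  x → y = 1.  We first show that <= is a partial order, that
   z ↦ z → a is monotone in a, and the exchange law x → (y → a) = y → (x → a),
   which makes  q <= z → a  equivalent to  z <= q → a.  Hence z lies in the
   filter slice [q,1]_a exactly when z is not below q → a.
   In a chain the complement of ]p,1] is [0,p]; intersecting the slices over
   all a <= p, monotonicity reduces everything to the single slice a = p, so
   [q,1] ⊑→ ]p,1] = { z | ~ z <= q → p }, which linearity turns into ]q→p,1]. *)

Section MVOrder.
Variable L : MVAlgebra.

Lemma neg_one : mv_neg (@mv_one L) = mv_zero.
Proof. unfold mv_one. apply mv_negK. Qed.

Lemma zero_oplus (x : L) : mv_oplus mv_zero x = x.
Proof. rewrite mv_oplusC. apply mv_oplus0. Qed.

Lemma one_oplus (x : L) : mv_oplus mv_one x = mv_one.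
Proof. rewrite mv_oplusC. apply mv_oplus1. Qed.

(* ¬x ⊕ x = 1: Łukasiewicz's axiom instantiated at y = 1. *)
Lemma neg_oplus_self (x : L) : mv_oplus (mv_neg x) x = mv_one.
Proof.
  pose proof (mv_luk L x mv_one) as H.
  unfold mv_one in H at 1 2. rewrite !mv_oplus1 in H.
  fold (@mv_one L) in H. rewrite neg_one, zero_oplus in H. symmetry. exact H.
Qed.

Lemma le_refl (x : L) : mv_le x x.
Proof. apply neg_oplus_self. Qed.

Lemma le_oplus_r (x w : L) : mv_le x (mv_oplus x w).
Proof.
  unfold mv_le, mv_imp. rewrite mv_oplusA, neg_oplus_self, one_oplus. reflexivity.
Qed.

Lemma le_exists_oplus (x y : L) : mv_le x y -> exists w, y = mv_oplus x w.
Proof.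
  unfold mv_le, mv_imp. intro Hxy.
  exists (mv_neg (mv_oplus (mv_neg y) x)).
  rewrite mv_oplusC, mv_luk, Hxy, neg_one, zero_oplus. reflexivity.
Qed.

Lemma le_trans (x y z : L) : mv_le x y -> mv_le y z -> mv_le x z.
Proof.
  intros Hxy Hyz.
  destruct (le_exists_oplus _ _ Hxy) as [w ->].
  destruct (le_exists_oplus _ _ Hyz) as [v ->].
  rewrite <- mv_oplusA. apply le_oplus_r.
Qed.

Lemma le_antisym (x y : L) : mv_le x y -> mv_le y x -> x = y.
Proof.
  unfold mv_le, mv_imp. intros Hxy Hyx.
  pose proof (mv_luk L x y) as H.
  rewrite Hxy, Hyx, neg_one, !zero_oplus in H. symmetry. exact H.
Qed.

Lemma imp_mono_r (z a b : L) : mv_le a b -> mv_le (mv_imp z a) (mv_imp z b).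
Proof.
  intro Hab. destruct (le_exists_oplus _ _ Hab) as [w ->].
  unfold mv_imp. rewrite mv_oplusA. apply le_oplus_r.
Qed.

Lemma imp_exchange (x y a : L) : mv_imp x (mv_imp y a) = mv_imp y (mv_imp x a).
Proof.
  unfold mv_imp. rewrite !mv_oplusA, (mv_oplusC L (mv_neg x)). reflexivity.
Qed.

Lemma le_imp_exchange (x y a : L) : mv_le x (mv_imp y a) <-> mv_le y (mv_imp x a).
Proof. unfold mv_le. rewrite imp_exchange. tauto. Qed.

Lemma Fsub_closed_up (q a z : L) :
  Fsub L (closed_up q) a z <-> ~ mv_le z (mv_imp q a).
Proof. unfold Fsub, closed_up. rewrite le_imp_exchange. tauto. Qed.

Section Chain.
Hypothesis Hlin : linearly_ordered L.

Lemma not_le_iff_lt (x y : L) : ~ mv_le y x <-> mv_lt x y.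
Proof.
  unfold mv_lt. split.
  - intro Hyx. destruct (Hlin x y) as [Hxy | Hxy]; [| contradiction].
    split; [exact Hxy |]. intros ->. apply Hyx, le_refl.
  - intros [Hxy Hne] Hyx. apply Hne, le_antisym; assumption.
Qed.

Lemma not_open_up_le (p a : L) : ~ open_up p a -> mv_le a p.
Proof.
  intro Ha. apply NNPP. intro Hap. apply Ha, not_le_iff_lt, Hap.
Qed.

(* Only the slice at a = p matters: [q,1] ⊑→ ]p,1] = { z | ~ z <= q → p }. *)
Lemma sqimp_closed_open (p q z : L) :
  sqimp (closed_up q) (open_up p) z <-> ~ mv_le z (mv_imp q p).
Proof.
  unfold sqimp. split.
  - intro Hz. apply Fsub_closed_up, Hz.
    intros [_ Hpp]. apply Hpp. reflexivity.
  - intros Hz a Ha. apply Fsub_closed_up. intro Hza.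
    apply Hz, (le_trans _ _ _ Hza), imp_mono_r, not_open_up_le, Ha.
Qed.

End Chain.
End MVOrder.

Theorem mainTheorem15 (L : MVAlgebra)
  (Hlin : linearly_ordered L) (Hnd : non_discrete L)
  (p q : L) (H0p : mv_le mv_zero p) (Hpq : mv_lt p q) (Hq1 : mv_le q mv_one) :
  forall z : L, sqimp (closed_up q) (open_up p) z <-> open_up (mv_imp q p) z.
Proof.
  intro z. unfold open_up.
  rewrite (sqimp_closed_open L Hlin), (not_le_iff_lt L Hlin).
  reflexivity.
Qed.
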